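(* Let $\mathbb{P}$ and $\mathbb{Q}$ be probability distributions with support $\mathcal{X}$, let $x_1,\dots,x_k$ be i.i.d. from $\mathbb{P}$ and $y_1,\dots,y_k$ i.i.d. from $\mathbb{Q}$ (independent), $k\ge2$, and let $f_{LS}(z)=-(z-1)^2+1$. For a critic $C:\mathcal{X}\to\mathbb{R}$ put $\hat\mu_{C(x)}=\frac1k\sum_{i=1}^kC(x_i)$, $\hat\mu_{C(y)}=\frac1k\sum_{i=1}^kC(y_i)$, $\hat\mu_C=\frac1k\sum_{i=1}^k\frac{C(x_i)+C(y_i)}{2}$, $\hat\sigma_{C(x)}=\frac1{k-1}\sum_{i=1}^k(C(x_i)-\hat\mu_{C(x)})^2$, $\hat\sigma_{C(y)}=\frac1{k-1}\sum_{i=1}^k(C(y_i)-\hat\mu_{C(y)})^2$. Then $$\sup_{C}\ \frac1k\Big(\hat\sigma_{C(x)}+\hat\sigma_{C(y)}-\sum_{i=1}^k\big(C(x_i)-\hat\mu_{C(y)}-1\big)^2-\sum_{j=1}^k\big(\hat\mu_{C(x)}-C(y_j)-1\big)^2\Big)+2,$$ $$\sup_{C}\ \frac2k\Big(\hat\sigma_{C(y)}-\sum_{i=1}^k\big(C(x_i)-\hat\mu_{C(y)}-1\big)^2\Big)+2,$$ $$\sup_{C}\ -\frac1k\Big(\tfrac12\hat\sigma_{C(x)}+\tfrac12\hat\sigma_{C(y)}+\sum_{i=1}^k\big(C(x_i)-\hat\mu_{C}-1\big)^2+\sum_{j=1}^k\big(\hat\mu_{C}-C(y_j)-1\big)^2\Big)+2$$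 are unbiased estimators of $\mathrm{D}^{Ra}_{f_{LS}}(\mathbb{P},\mathbb{Q})$, $\mathrm{D}^{Ralf}_{f_{LS}}(\mathbb{P},\mathbb{Q})$ and $\mathrm{D}^{Rc}_{f_{LS}}(\mathbb{P},\mathbb{Q})$ respectively.
   Context: Suprema range over (measurable) critics $C:\mathcal{X}\to\mathbb{R}$ with the relevant moments finite. With $\mathbb{M}=\frac12\mathbb{P}+\frac12\mathbb{Q}$: $\mathrm{D}^{Ra}_f(\mathbb{P},\mathbb{Q})=\sup_C \mathbb{E}_{x\sim\mathbb{P}}[f(C(x)-\mathbb{E}_{y\sim\mathbb{Q}}C(y))]+\mathbb{E}_{y\sim\mathbb{Q}}[f(\mathbb{E}_{x\sim\mathbb{P}}C(x)-C(y))]$; $\mathrm{D}^{Ralf}_f(\mathbb{P},\mathbb{Q})=\sup_C 2\,\mathbb{E}_{x\sim\mathbb{P}}[f(C(x)-\mathbb{E}_{y\sim\mathbb{Q}}C(y))]$; $\mathrm{D}^{Rc}_f(\mathbb{P},\mathbb{Q})=\sup_C \mathbb{E}_{x\sim\mathbb{P}}[f(C(x)-\mathbb{E}_{m\sim\mathbb{M}}C(m))]+\mathbb{E}_{y\sim\mathbb{Q}}[f(\mathbb{E}_{m\sim\mathbb{M}}C(m)-C(y))]$. *)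

From HB Require Import structures.
From mathcomp Require Import all_boot all_order all_algebra.
From mathcomp Require Import all_classical all_reals all_analysis.
Set Implicit Arguments. Unset Strict Implicit. Unset Printing Implicit Defensive.
Import Order.TTheory GRing.Theory Num.Theory.
Local Open Scope classical_set_scope.
Local Open Scope ring_scope.

Section Defs.
Variable R : realType.

Definition fLS (z : R) : R := - (z - 1) ^+ 2 + 1.

Definition meanC (dX : measure_display) (Xs : measurableType dX)
  (P : probability Xs R) (C : Xs -> R) : R := fine (\int[P]_x (C x)%:E).

(* the objectives inside the suprema of D^Ra, D^Ralf, D^Rc for f = f_LS *)
Definition obj_Ra dX (Xs : measurableType dX) (P Q : probability Xs R)
  (C : Xs -> R) : \bar R :=
  (\int[P]_x (fLS (C x - meanC Q C))%:E + \int[Q]_y (fLS (meanC P C - C y))%:E)%E.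

Definition obj_Ralf dX (Xs : measurableType dX) (P Q : probability Xs R)
  (C : Xs -> R) : \bar R :=
  (2%:E * \int[P]_x (fLS (C x - meanC Q C))%:E)%E.

(* E_{m ~ M} C(m) with M = P/2 + Q/2 *)
Definition meanM dX (Xs : measurableType dX) (P Q : probability Xs R)
  (C : Xs -> R) : R := (meanC P C + meanC Q C) / 2.

Definition obj_Rc dX (Xs : measurableType dX) (P Q : probability Xs R)
  (C : Xs -> R) : \bar R :=
  (\int[P]_x (fLS (C x - meanM P Q C))%:E
   + \int[Q]_y (fLS (meanM P Q C - C y))%:E)%E.

Definition muhat (k : nat) (s : 'I_k -> R) : R := k%:R^-1 * \sum_(i < k) s i.
Definition sighat (k : nat) (s : 'I_k -> R) : R :=
  (k%:R - 1)^-1 * \sum_(i < k) (s i - muhat s) ^+ 2.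

Definition est_Ra (k : nat) (cx cy : 'I_k -> R) : R :=
  k%:R^-1 * (sighat cx + sighat cy
             - \sum_(i < k) (cx i - muhat cy - 1) ^+ 2
             - \sum_(j < k) (muhat cx - cy j - 1) ^+ 2) + 2.

Definition est_Ralf (k : nat) (cx cy : 'I_k -> R) : R :=
  2 / k%:R * (sighat cy - \sum_(i < k) (cx i - muhat cy - 1) ^+ 2) + 2.

Definition est_Rc (k : nat) (cx cy : 'I_k -> R) : R :=
  let muC := k%:R^-1 * \sum_(i < k) ((cx i + cy i) / 2) in
  - (k%:R^-1 * (2^-1 * sighat cx + 2^-1 * sighat cy
              + \sum_(i < k) (cx i - muC - 1) ^+ 2
              + \sum_(j < k) (muC - cy j - 1) ^+ 2)) + 2.

Definition mutual_indep d (Om : measurableType d) (Pr : probability Om R)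
  (I : finType) dX (Xs : measurableType dX) (Z : I -> Om -> Xs) : Prop :=
  forall A : I -> set Xs, (forall i, measurable (A i)) ->
    Pr (\bigcap_(i in [set: I]) (Z i @^-1` A i))
    = (\prod_(i : I) Pr (Z i @^-1` A i))%E.

End Defs.

Definition sample_family (T U : Type) (k : nat) (X Y : 'I_k -> T -> U)
  : ('I_k + 'I_k)%type -> T -> U :=
  fun s => match s with inl i => X i | inr j => Y j end.

From HB Require Import structures.
From mathcomp Require Import all_boot all_order all_algebra.
From mathcomp Require Import all_classical all_reals all_analysis.
From mathcomp Require Import ring lra measurable_realfun.
Set Implicit Arguments.
Unset Strict Implicit.
Unset Printing Implicit Defensive.
Import Order.TTheory GRing.Theory Num.Theory.
Local Open Scope classical_set_scope.
Local Open Scope ring_scope.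

(* Each estimator is an affine combination of sums of squared deviations
   sum_i (s_i - al * muhat s - be * muhat t - c)^2, where s, t are the two
   samples.  Independence makes the 2k observations pairwise uncorrelated, and
   each deviation is an affine combination of them, so its second moment is its
   squared mean plus the weighted variances of the observations.  Summing over i
   gives k (a - al a - be b - c)^2 + (k - 2 al + al^2) Var_P C + be^2 Var_Q C,
   with a, b the means of C under P, Q.  On the other side
   E_P[f_LS (C - c)] = 1 - Var_P C - (a - c - 1)^2, and the two closed forms agree:
   the sample variances exactly compensate the variance of the sample means. *)

Section integrable_EFin.
Context d (T : measurableType d) (R : realType) (mu : {measure set T -> \bar R}).
Implicit Types f g : T -> R.

Lemma integrableD_EFin f g : mu.-integrable setT (EFin \o f) ->
  mu.-integrable setT (EFin \o g) ->
  mu.-integrable setT (EFin \o (fun x => f x + g x)).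
Proof. exact: integrableD. Qed.

Lemma integrableB_EFin f g : mu.-integrable setT (EFin \o f) ->
  mu.-integrable setT (EFin \o g) ->
  mu.-integrable setT (EFin \o (fun x => f x - g x)).
Proof. exact: integrableB. Qed.

Lemma integrableZl_EFin (c : R) f : mu.-integrable setT (EFin \o f) ->
  mu.-integrable setT (EFin \o (fun x => c * f x)).
Proof. exact: integrableZl. Qed.

Lemma integrable_sum_EFin (I : Type) (s : seq I) (F : I -> T -> R) :
  (forall i, mu.-integrable setT (EFin \o F i)) ->
  mu.-integrable setT (EFin \o (fun x => \sum_(i <- s) F i x)).
Proof.
move=> iF; apply: eq_integrable (integrable_sum measurableT s (P := xpredT)
  (h := fun i x => (F i x)%:E) (fun i _ => iF i)) => //.
by move=> x _ /=; rewrite sumEFin.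
Qed.

Lemma EFin_Rintegral f : mu.-integrable setT (EFin \o f) ->
  (\int[mu]_x f x)%:E = (\int[mu]_x (f x)%:E)%E.
Proof. by move=> i; rewrite fineK // integrable_fin_num. Qed.

Lemma Rintegral_sum (I : Type) (s : seq I) (F : I -> T -> R) :
  (forall i, mu.-integrable setT (EFin \o F i)) ->
  \int[mu]_x (\sum_(i <- s) F i x) = \sum_(i <- s) \int[mu]_x F i x.
Proof.
move=> iF; apply: EFin_inj.
rewrite EFin_Rintegral; last exact: integrable_sum_EFin.
under eq_integral do rewrite -sumEFin.
rewrite integral_sum // -sumEFin.
by apply: eq_bigr => i _; rewrite EFin_Rintegral.
Qed.

Lemma integrable_mul_of_sqr f g :
  measurable_fun setT f -> measurable_fun setT g ->
  mu.-integrable setT (EFin \o (fun x => f x ^+ 2)) ->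
  mu.-integrable setT (EFin \o (fun x => g x ^+ 2)) ->
  mu.-integrable setT (EFin \o (fun x => f x * g x)).
Proof.
move=> mf mg if2 ig2.
apply: (le_integrable measurableT); last exact: integrableD_EFin if2 ig2.
  by apply/measurable_EFinP; exact: measurable_funM.
move=> x _; rewrite /= lee_fin normrM [X in _ <= X]ger0_norm ?addr_ge0 ?sqr_ge0 //.
rewrite -(real_normK (num_real (f x))) -(real_normK (num_real (g x))).
by have := normr_ge0 (f x); have := normr_ge0 (g x); nra.
Qed.

End integrable_EFin.

Lemma integrable_prob_cst d (T : measurableType d) (R : realType)
  (P : probability T R) (c : R) : P.-integrable setT (EFin \o (fun _ => c)).
Proof. exact: finite_measure_integrable_cst. Qed.

#[local] Hint Resolve integrableD_EFin integrableB_EFin integrableZl_EFin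
  integrable_sum_EFin : core.
(* [auto]'s unifier does not see through the probability structure of [P]. *)
#[local] Hint Extern 0 (is_true (_.-integrable _ (EFin \o (fun _ => _)))) =>
  exact: integrable_prob_cst : core.

Section probability_integrals.
Context d (T : measurableType d) (R : realType) (P : probability T R).
Implicit Types f : T -> R.

Lemma integrable_of_sqr f : measurable_fun setT f ->
  P.-integrable setT (EFin \o (fun x => f x ^+ 2)) ->
  P.-integrable setT (EFin \o f).
Proof.
move=> mf if2; apply: (le_integrable measurableT);
  last exact: integrableD_EFin (integrable_prob_cst P 1) if2.
  exact/measurable_EFinP.
move=> x _; rewrite /= lee_fin [X in _ <= X]ger0_norm ?addr_ge0 ?sqr_ge0 //.
rewrite -(real_normK (num_real (f x))).
by have := normr_ge0 (f x); nra.
Qed.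

Lemma Rintegral_prob_cst (c : R) : \int[P]_x c = c.
Proof. by rewrite /Rintegral integral_cst //= probability_setT mule1. Qed.

Section centered_square.
Context (f : T -> R) (c : R).
Hypothesis mf : measurable_fun setT f.
Hypothesis if2 : P.-integrable setT (EFin \o (fun x => f x ^+ 2)).

Let if1 := integrable_of_sqr mf if2.

Let sqr_subE x : (f x - c) ^+ 2 = f x ^+ 2 - 2 * c * f x + c ^+ 2.
Proof. by ring. Qed.

Lemma integrable_sqr_sub :
  P.-integrable setT (EFin \o (fun x => (f x - c) ^+ 2)).
Proof. by under eq_fun do rewrite sqr_subE; auto. Qed.

Lemma Rintegral_sqr_sub : \int[P]_x (f x - c) ^+ 2 =
  (\int[P]_x f x ^+ 2 - (\int[P]_x f x) ^+ 2) + (\int[P]_x f x - c) ^+ 2.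
Proof.
under eq_Rintegral do rewrite sqr_subE.
rewrite !(RintegralB, RintegralD, RintegralZl) ?Rintegral_prob_cst; try by [|auto].
by ring.
Qed.

End centered_square.

End probability_integrals.

Section law_transfer.
Context d dX (Om : measurableType d) (Xs : measurableType dX) (R : realType).
Context (mu : {measure set Om -> \bar R}) (nu : {measure set Xs -> \bar R}).
Context (Z : Om -> Xs).
Hypothesis mZ : measurable_fun setT Z.
Hypothesis lawZ : forall A, measurable A -> mu (Z @^-1` A) = nu A.

Let integral_law (h : Xs -> \bar R) :
  (\int[pushforward mu Z]_x h x = \int[nu]_x h x)%E.
Proof. by apply: eq_measure_integral => A mA _; rewrite -lawZ. Qed.

Lemma integrable_comp_lawE (g : Xs -> R) : measurable_fun setT g ->
  mu.-integrable setT (EFin \o (fun w => g (Z w))) =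
  nu.-integrable setT (EFin \o g).
Proof.
move=> mg; have mEg : measurable_fun setT (EFin \o g) by exact/measurable_EFinP.
have abs_eq : (\int[mu]_w `|(g (Z w))%:E| = \int[nu]_x `|(g x)%:E|)%E.
  by rewrite -integral_law ge0_integral_pushforward //; exact: measurableT_comp.
apply/integrableP/integrableP => -[_ ig]; split => //.
- by rewrite -abs_eq.
- by apply/measurable_EFinP; exact: measurableT_comp.
- by rewrite abs_eq.
Qed.

Lemma Rintegral_comp_law (g : Xs -> R) : measurable_fun setT g ->
  nu.-integrable setT (EFin \o g) -> \int[mu]_w g (Z w) = \int[nu]_x g x.
Proof.
move=> mg ig; congr fine; rewrite -integral_law integral_pushforward //.
- exact/measurable_EFinP.
- by rewrite preimage_setT integrable_comp_lawE.
Qed.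

End law_transfer.

Section independent_pair.
Context d d1 d2 (Om : measurableType d) (X1 : measurableType d1)
  (X2 : measurableType d2) (R : realType).
Context (Pr : probability Om R) (P1 : probability X1 R) (P2 : probability X2 R).
Context (U : Om -> X1) (V : Om -> X2).
Hypothesis mU : measurable_fun setT U.
Hypothesis mV : measurable_fun setT V.
Hypothesis UV_indep : forall A B, measurable A -> measurable B ->
  Pr (U @^-1` A `&` V @^-1` B) = (P1 A * P2 B)%E.

Let UV w := (U w, V w).
(* Needed to equip [pushforward Pr UV] with its measure structure. *)
Let mUV : measurable_fun setT UV := measurable_fun_pair mU mV.

Let law_UV A : measurable A -> Pr (UV @^-1` A) = (P1 \x P2)%E A.
Proof.
move=> mA; symmetry.
apply: (product_measure_unique (m' := pushforward Pr UV));
  [exact: UV_indep | exact: mA].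
Qed.

Lemma Rintegral_indep_mul (f : X1 -> R) (g : X2 -> R) :
  measurable_fun setT f -> measurable_fun setT g ->
  P1.-integrable setT (EFin \o f) -> P2.-integrable setT (EFin \o g) ->
  Pr.-integrable setT (EFin \o (fun w => f (U w) * g (V w))) ->
  \int[Pr]_w (f (U w) * g (V w)) = \int[P1]_x f x * \int[P2]_y g y.
Proof.
move=> mf mg if_ ig ifg.
pose h z := f z.1 * g z.2.
have mh : measurable_fun setT h.
  by apply: measurable_funM; apply: measurableT_comp.
have ih : (P1 \x P2)%E.-integrable setT (EFin \o h).
  by rewrite -(integrable_comp_lawE mUV law_UV mh).
rewrite (Rintegral_comp_law mUV law_UV mh ih) /Rintegral.
rewrite -(integral12_prod_meas1 ih) /fubini_F /=.
have inner x : (\int[P2]_y (f x * g y)%:E = (f x * \int[P2]_y g y)%:E)%E.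
  by rewrite -EFin_Rintegral ?RintegralZl //; exact: integrableZl_EFin.
under eq_integral do rewrite inner.
rewrite -EFin_Rintegral ?RintegralZr //.
by under eq_fun do rewrite mulrC; exact: integrableZl_EFin.
Qed.

End independent_pair.

Lemma mutual_indep_pair d dX (Om : measurableType d) (Xs : measurableType dX)
    (R : realType) (Pr : probability Om R) (I : finType) (Z : I -> Om -> Xs) :
  mutual_indep Pr Z -> forall s t, s != t ->
  forall A B, measurable A -> measurable B ->
  Pr (Z s @^-1` A `&` Z t @^-1` B) = (Pr (Z s @^-1` A) * Pr (Z t @^-1` B))%E.
Proof.
move=> indep s t st A B mA mB.
pose F i := if i == s then A else if i == t then B else setT.
have mF i : measurable (F i) by rewrite /F; case: ifP => _ //; case: ifP.
have -> : Z s @^-1` A `&` Z t @^-1` B = \bigcap_(i in [set: I]) Z i @^-1` F i.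
  apply/seteqP; split => [w [As Bt] i _|w FZ]; last first.
    by split; [move: (FZ s Logic.I); rewrite /F eqxx | move: (FZ t Logic.I);
      rewrite /F eq_sym (negbTE st) eqxx].
  by rewrite /F; case: eqP => [->|_] //; case: eqP => [->|].
rewrite indep // (bigD1 s) //= (bigD1 t) 1?eq_sym //= big1 ?mule1.
  by rewrite /F eqxx eq_sym (negbTE st) eqxx.
move=> i /andP[/negbTE si /negbTE ti].
by rewrite /F si ti preimage_setT probability_setT.
Qed.

Definition uncorrelated d (Om : measurableType d) (R : realType)
    (Pr : probability Om R) (I : eqType) (z : I -> Om -> R) : Prop :=
  forall s t, s != t ->
    \int[Pr]_w (z s w * z t w) = \int[Pr]_w z s w * \int[Pr]_w z t w.

Section uncorrelated_family.
Context d (Om : measurableType d) (R : realType) (Pr : probability Om R).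
Context (I : finType) (z : I -> Om -> R).
Hypothesis mz : forall s, measurable_fun setT (z s).
Hypothesis iz2 : forall s, Pr.-integrable setT (EFin \o (fun w => z s w ^+ 2)).
Hypothesis z_uncorrelated : uncorrelated Pr z.

Let iz s : Pr.-integrable setT (EFin \o z s) := integrable_of_sqr (mz s) (iz2 s).
Let izz s t : Pr.-integrable setT (EFin \o (fun w => z s w * z t w)) :=
  integrable_mul_of_sqr (mz s) (mz t) (iz2 s) (iz2 t).

Let sqr_affineE (c : I -> R) c0 w : (\sum_s c s * z s w + c0) ^+ 2 =
  \sum_s \sum_t (c s * c t) * (z s w * z t w)
  + (\sum_s (2 * c0 * c s) * z s w + c0 ^+ 2).
Proof.
rewrite sqrrD expr2 big_distrlr /= -addrA; congr (_ + _).
  by apply: eq_bigr => s _; apply: eq_bigr => t _; ring.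
rewrite -mulr_natr !mulr_suml; congr (_ + _).
by apply: eq_bigr => s _; ring.
Qed.

Lemma integrable_sqr_affine (c : I -> R) c0 :
  Pr.-integrable setT (EFin \o (fun w => (\sum_s c s * z s w + c0) ^+ 2)).
Proof. by under eq_fun do rewrite sqr_affineE; auto. Qed.

Lemma Rintegral_sqr_affine (c : I -> R) c0 :
  \int[Pr]_w (\sum_s c s * z s w + c0) ^+ 2 =
  \sum_s c s ^+ 2 * (\int[Pr]_w z s w ^+ 2 - (\int[Pr]_w z s w) ^+ 2)
  + (\sum_s c s * \int[Pr]_w z s w + c0) ^+ 2.
Proof.
pose m s := \int[Pr]_w z s w.
have second_moment s : \int[Pr]_w \sum_t (c s * c t) * (z s w * z t w) =
    c s ^+ 2 * (\int[Pr]_w z s w ^+ 2 - m s ^+ 2)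
    + \sum_t (c s * m s) * (c t * m t).
  rewrite Rintegral_sum; last by auto.
  rewrite (bigD1 s) //= [in RHS](bigD1 s) //= addrA.
  congr (_ + _).
    by rewrite RintegralZl //; under eq_Rintegral do rewrite -expr2; ring.
  apply: eq_bigr => t ts.
  by rewrite RintegralZl // z_uncorrelated 1?eq_sym // /m; ring.
under eq_Rintegral do rewrite sqr_affineE.
rewrite !(RintegralD, Rintegral_sum) ?Rintegral_prob_cst; try by [|auto].
under eq_bigr do rewrite second_moment.
rewrite big_split /= -big_distrlr /= -expr2.
under [X in _ + (X + _)]eq_bigr do rewrite RintegralZl // -mulrA.
by rewrite -mulr_sumr /m; ring.
Qed.

End uncorrelated_family.

Lemma sum_delta (R : pzSemiRingType) n (i : 'I_n) (F : 'I_n -> R) :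
  \sum_j (i == j)%:R * F j = F i.
Proof.
rewrite (bigD1 i) //= eqxx mul1r big1 ?addr0 // => j /negbTE.
by rewrite eq_sym => ->; rewrite mul0r.
Qed.

Definition sqdev (R : realType) k (al be c : R) (s t : 'I_k -> R) : R :=
  \sum_(i < k) (s i - al * muhat s - be * muhat t - c) ^+ 2.

Section sample_deviation.
Context d (Om : measurableType d) (R : realType) (Pr : probability Om R).
Context (k : nat) (x y : 'I_k -> Om -> R) (a b va vb : R).
Hypothesis k_gt0 : (0 < k)%N.
Hypothesis mxy : forall s, measurable_fun setT (sample_family x y s).
Hypothesis ixy2 : forall s,
  Pr.-integrable setT (EFin \o (fun w => sample_family x y s w ^+ 2)).
Hypothesis xy_uncorrelated : uncorrelated Pr (sample_family x y).
Hypothesis Ex : forall i, \int[Pr]_w x i w = a.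
Hypothesis Ex2 : forall i, \int[Pr]_w x i w ^+ 2 = va.
Hypothesis Ey : forall j, \int[Pr]_w y j w = b.
Hypothesis Ey2 : forall j, \int[Pr]_w y j w ^+ 2 = vb.

Let k_neq0 : k%:R != 0 :> R. Proof. by rewrite pnatr_eq0 -lt0n. Qed.

Let weight (al be : R) (i : 'I_k) (s : 'I_k + 'I_k) : R :=
  if s is inl j then (i == j)%:R - al / k%:R else - (be / k%:R).

Let deviationE al be c i w :
  x i w - al * muhat (x^~ w) - be * muhat (y^~ w) - c =
  \sum_s weight al be i s * sample_family x y s w + - c.
Proof.
rewrite big_sumType /=; under eq_bigr do rewrite mulrBl.
by rewrite sumrB sum_delta -!mulr_sumr /muhat; congr (_ + _); ring.
Qed.

Let integrable_sqr_deviation al be c i : Pr.-integrable setT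
  (EFin \o (fun w => (x i w - al * muhat (x^~ w) - be * muhat (y^~ w) - c) ^+ 2)).
Proof. by under eq_fun do rewrite deviationE; exact: integrable_sqr_affine. Qed.

Let Rintegral_sqr_deviation al be c i :
  \int[Pr]_w (x i w - al * muhat (x^~ w) - be * muhat (y^~ w) - c) ^+ 2 =
  (1 - 2 * al / k%:R + al ^+ 2 / k%:R) * (va - a ^+ 2)
  + be ^+ 2 / k%:R * (vb - b ^+ 2) + (a - al * a - be * b - c) ^+ 2.
Proof.
under eq_Rintegral do rewrite deviationE.
rewrite Rintegral_sqr_affine // !big_sumType /=.
under [X in (X + _) + _ = _]eq_bigr do rewrite Ex Ex2.
under [X in (_ + X) + _ = _]eq_bigr do rewrite Ey Ey2.
under [X in _ + (X + _ + _) ^+ 2 = _]eq_bigr do rewrite Ex mulrBl.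
under [X in _ + (_ + X + _) ^+ 2 = _]eq_bigr do rewrite Ey.
have sqr_weight j : ((i == j)%:R - al / k%:R) ^+ 2 =
    (i == j)%:R * (1 - 2 * (al / k%:R)) + (al / k%:R) ^+ 2.
  by case: (i == j); rewrite /= ?mulr1n ?mulr0n; ring.
under eq_bigr do rewrite sqr_weight mulrDl -mulrA.
rewrite big_split sumrB /= !sum_delta !sumr_const card_ord.
by field.
Qed.

Lemma integrable_sqdev al be c :
  Pr.-integrable setT (EFin \o (fun w => sqdev al be c (x^~ w) (y^~ w))).
Proof. exact: integrable_sum_EFin. Qed.

Lemma Rintegral_sqdev al be c :
  \int[Pr]_w sqdev al be c (x^~ w) (y^~ w) =
  k%:R * (a - al * a - be * b - c) ^+ 2
  + (k%:R - 2 * al + al ^+ 2) * (va - a ^+ 2) + be ^+ 2 * (vb - b ^+ 2).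
Proof.
rewrite Rintegral_sum //; under eq_bigr do rewrite Rintegral_sqr_deviation.
by rewrite sumr_const card_ord; field.
Qed.

End sample_deviation.

Section estimators_sqdev.
Context (R : realType) (k : nat).
Implicit Types s t : 'I_k -> R.

Lemma sighat_sqdev s t : sighat s = (k%:R - 1)^-1 * sqdev 1 0 0 s t.
Proof. by congr (_ * _); apply: eq_bigr => i _; rewrite mul1r mul0r !subr0. Qed.

Lemma est_Ra_sqdev s t : est_Ra s t =
  k%:R^-1 * ((k%:R - 1)^-1 * sqdev 1 0 0 s t + (k%:R - 1)^-1 * sqdev 1 0 0 t s
             - sqdev 0 1 1 s t - sqdev 0 1 (-1) t s) + 2.
Proof.
rewrite /est_Ra (sighat_sqdev s t) (sighat_sqdev t s) /sqdev.
by congr (_ * (_ - _ - _) + _); apply: eq_bigr => i _; ring.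
Qed.

Lemma est_Ralf_sqdev s t : est_Ralf s t =
  2 / k%:R * ((k%:R - 1)^-1 * sqdev 1 0 0 t s - sqdev 0 1 1 s t) + 2.
Proof.
rewrite /est_Ralf (sighat_sqdev t s) /sqdev.
by congr (_ * (_ - _) + _); apply: eq_bigr => i _; ring.
Qed.

Lemma est_Rc_sqdev s t : est_Rc s t =
  2 - k%:R^-1 * (2^-1 * ((k%:R - 1)^-1 * sqdev 1 0 0 s t)
                 + 2^-1 * ((k%:R - 1)^-1 * sqdev 1 0 0 t s)
                 + sqdev 2^-1 2^-1 1 s t + sqdev 2^-1 2^-1 (-1) t s).
Proof.
rewrite /est_Rc (sighat_sqdev s t) (sighat_sqdev t s) /sqdev /=.
have -> : k%:R^-1 * \sum_(i < k) ((s i + t i) / 2) =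
    2^-1 * muhat s + 2^-1 * muhat t.
  by rewrite /muhat -mulr_suml big_split /=; ring.
rewrite addrC; congr (_ - _ * (_ + _ + _ + _)).
all: by apply: eq_bigr => i _; ring.
Qed.

End estimators_sqdev.

Section estimator_expectations.
Context d (Om : measurableType d) (R : realType) (Pr : probability Om R).
Context (k : nat) (x y : 'I_k -> Om -> R) (a b va vb : R).
Hypothesis k_gt1 : (1 < k)%N.
Hypothesis mxy : forall s, measurable_fun setT (sample_family x y s).
Hypothesis ixy2 : forall s,
  Pr.-integrable setT (EFin \o (fun w => sample_family x y s w ^+ 2)).
Hypothesis xy_uncorrelated : uncorrelated Pr (sample_family x y).
Hypothesis Ex : forall i, \int[Pr]_w x i w = a.
Hypothesis Ex2 : forall i, \int[Pr]_w x i w ^+ 2 = va.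
Hypothesis Ey : forall j, \int[Pr]_w y j w = b.
Hypothesis Ey2 : forall j, \int[Pr]_w y j w ^+ 2 = vb.

Let k_gt0 : (0 < k)%N := ltnW k_gt1.
Let k_neq0 : k%:R != 0 :> R. Proof. by rewrite pnatr_eq0 -lt0n. Qed.
Let k1_neq0 : k%:R - 1 != 0 :> R.
Proof. by rewrite subr_eq0 -[1]/(1%:R) eqr_nat neq_ltn k_gt1 orbT. Qed.

(* The deviation sums of the second sample are those of the first one for the
   swapped pair (y, x). *)
Let myx s : measurable_fun setT (sample_family y x s).
Proof. by case: s => i; [exact: (mxy (inr i)) | exact: (mxy (inl i))]. Qed.

Let iyx2 s :
  Pr.-integrable setT (EFin \o (fun w => sample_family y x s w ^+ 2)).
Proof. by case: s => i; [exact: (ixy2 (inr i)) | exact: (ixy2 (inl i))]. Qed.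

Let yx_uncorrelated : uncorrelated Pr (sample_family y x).
Proof.
case=> i [] j ij.
- exact: (xy_uncorrelated (s := inr i) (t := inr j)).
- exact: (xy_uncorrelated (s := inr i) (t := inl j)).
- exact: (xy_uncorrelated (s := inl i) (t := inr j)).
- exact: (xy_uncorrelated (s := inl i) (t := inl j)).
Qed.

Let ixy := integrable_sqdev mxy ixy2.
Let iyx := integrable_sqdev myx iyx2.
Let Exy := Rintegral_sqdev k_gt0 mxy ixy2 xy_uncorrelated Ex Ex2 Ey Ey2.
Let Eyx := Rintegral_sqdev k_gt0 myx iyx2 yx_uncorrelated Ey Ey2 Ex Ex2.

Lemma integral_est_Ra : (\int[Pr]_w (est_Ra (x^~ w) (y^~ w))%:E =
  (2 - (va - a ^+ 2) - (vb - b ^+ 2) - 2 * (a - b - 1) ^+ 2)%:E)%E.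
Proof.
under eq_integral do rewrite est_Ra_sqdev.
rewrite -EFin_Rintegral; last by auto 10.
congr EFin; rewrite !(RintegralB, RintegralD, RintegralZl) ?Rintegral_prob_cst;
  try by [|auto 10].
by rewrite !Exy !Eyx; field; rewrite k1_neq0 k_neq0.
Qed.

Lemma integral_est_Ralf : (\int[Pr]_w (est_Ralf (x^~ w) (y^~ w))%:E =
  (2 - 2 * (va - a ^+ 2) - 2 * (a - b - 1) ^+ 2)%:E)%E.
Proof.
under eq_integral do rewrite est_Ralf_sqdev.
rewrite -EFin_Rintegral; last by auto 10.
congr EFin; rewrite !(RintegralB, RintegralD, RintegralZl) ?Rintegral_prob_cst;
  try by [|auto 10].
by rewrite Exy Eyx; field; rewrite k1_neq0 k_neq0.
Qed.

Lemma integral_est_Rc : (\int[Pr]_w (est_Rc (x^~ w) (y^~ w))%:E =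
  (2 - (va - a ^+ 2) - (vb - b ^+ 2) - 2 * ((a - b) / 2 - 1) ^+ 2)%:E)%E.
Proof.
under eq_integral do rewrite est_Rc_sqdev.
rewrite -EFin_Rintegral; last by auto 10.
congr EFin; rewrite !(RintegralB, RintegralD, RintegralZl) ?Rintegral_prob_cst;
  try by [|auto 10].
by rewrite !Exy !Eyx; field; rewrite k1_neq0 k_neq0.
Qed.

End estimator_expectations.

Section fLS_objective.
Context d (T : measurableType d) (R : realType) (P : probability T R).
Context (f : T -> R).
Hypothesis mf : measurable_fun setT f.
Hypothesis if2 : P.-integrable setT (EFin \o (fun x => f x ^+ 2)).

Lemma integral_fLS_subr c : (\int[P]_x (fLS (f x - c))%:E =
  (1 - (\int[P]_x f x ^+ 2 - (\int[P]_x f x) ^+ 2)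
     - (\int[P]_x f x - c - 1) ^+ 2)%:E)%E.
Proof.
have fLSE x : fLS (f x - c) = 1 - (f x - (c + 1)) ^+ 2 by rewrite /fLS; ring.
have isqr := integrable_sqr_sub (c + 1) mf if2.
under eq_integral do rewrite fLSE.
rewrite -EFin_Rintegral; last by auto.
rewrite RintegralB ?Rintegral_prob_cst ?Rintegral_sqr_sub //.
by congr EFin; ring.
Qed.

Lemma integral_fLS_subl c : (\int[P]_x (fLS (c - f x))%:E =
  (1 - (\int[P]_x f x ^+ 2 - (\int[P]_x f x) ^+ 2)
     - (c - \int[P]_x f x - 1) ^+ 2)%:E)%E.
Proof.
have fLS_subC x : fLS (c - f x) = fLS (f x - (c - 2)) by rewrite /fLS; ring.
under eq_integral do rewrite fLS_subC.
by rewrite integral_fLS_subr; congr (_ - _)%:E; ring.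
Qed.

End fLS_objective.

Section critic_samples.
Context (R : realType) d dX (Om : measurableType d) (Xs : measurableType dX).
Context (Pr : probability Om R) (P Q : probability Xs R) (k : nat).
Context (X Y : 'I_k -> Om -> Xs) (C : Xs -> R).
Hypothesis mX : forall i, measurable_fun setT (X i).
Hypothesis mY : forall j, measurable_fun setT (Y j).
Hypothesis lawX : forall i A, measurable A -> Pr (X i @^-1` A) = P A.
Hypothesis lawY : forall j A, measurable A -> Pr (Y j @^-1` A) = Q A.
Hypothesis XY_indep : mutual_indep Pr (sample_family X Y).
Hypothesis mC : measurable_fun setT C.
Hypothesis iP2 : P.-integrable setT (EFin \o (fun x => C x ^+ 2)).
Hypothesis iQ2 : Q.-integrable setT (EFin \o (fun x => C x ^+ 2)).

Let Z := sample_family X Y.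
Let L (s : 'I_k + 'I_k) : probability Xs R := if s is inl _ then P else Q.
Let mZ s : measurable_fun setT (Z s). Proof. by case: s. Qed.
Let lawZ s A : measurable A -> Pr (Z s @^-1` A) = L s A.
Proof. by case: s => i; [exact: lawX | exact: lawY]. Qed.
Let iL2 s : (L s).-integrable setT (EFin \o (fun x => C x ^+ 2)).
Proof. by case: s. Qed.
Let mC2 : measurable_fun setT (fun x => C x ^+ 2).
Proof. exact: measurable_funX. Qed.

Let x i w := C (X i w).
Let y j w := C (Y j w).
Let xyE s : sample_family x y s = fun w => C (Z s w). Proof. by case: s. Qed.

Lemma measurable_critic_sample s : measurable_fun setT (sample_family x y s).
Proof. by rewrite xyE; exact: measurableT_comp. Qed.

Lemma integrable_critic_sample_sqr s :
  Pr.-integrable setT (EFin \o (fun w => sample_family x y s w ^+ 2)).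
Proof.
by rewrite xyE; move: (iL2 s); rewrite -(integrable_comp_lawE (mZ s) (lawZ s) mC2).
Qed.

Lemma critic_sample_uncorrelated : uncorrelated Pr (sample_family x y).
Proof.
move=> s t st.
have ist := integrable_mul_of_sqr (measurable_critic_sample s)
  (measurable_critic_sample t) (integrable_critic_sample_sqr s)
  (integrable_critic_sample_sqr t).
have iL1 u := integrable_of_sqr mC (iL2 u).
rewrite !xyE in ist *.
rewrite !(Rintegral_comp_law (mZ _) (lawZ _) mC (iL1 _)).
apply: Rintegral_indep_mul => // A B mA mB.
by rewrite mutual_indep_pair // !lawZ.
Qed.

End critic_samples.

Theorem corollary4p2 (R : realType) (d dX : measure_display)
  (Om : measurableType d) (Xs : measurableType dX)
  (Pr : probability Om R) (P Q : probability Xs R)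
  (k : nat) (hk : (2 <= k)%N) (X Y : 'I_k -> Om -> Xs) :
  (forall i, measurable_fun setT (X i)) ->
  (forall j, measurable_fun setT (Y j)) ->
  (forall i A, measurable A -> Pr (X i @^-1` A) = P A) ->
  (forall j A, measurable A -> Pr (Y j @^-1` A) = Q A) ->
  mutual_indep Pr (sample_family X Y) ->
  forall C : Xs -> R, measurable_fun setT C ->
  P.-integrable setT (fun x => (C x ^+ 2)%:E) ->
  Q.-integrable setT (fun x => (C x ^+ 2)%:E) ->
  [/\ (\int[Pr]_w (est_Ra (fun i => C (X i w)) (fun j => C (Y j w)))%:E
        = obj_Ra P Q C)%E,
      (\int[Pr]_w (est_Ralf (fun i => C (X i w)) (fun j => C (Y j w)))%:E
        = obj_Ralf P Q C)%E &
      (\int[Pr]_w (est_Rc (fun i => C (X i w)) (fun j => C (Y j w)))%:E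
        = obj_Rc P Q C)%E].
Proof.
move=> mX mY lawX lawY indep C mC iP2 iQ2.
have mxy := measurable_critic_sample mX mY mC.
have ixy2 := integrable_critic_sample_sqr mX mY lawX lawY mC iP2 iQ2.
have xy_unc := critic_sample_uncorrelated mX mY lawX lawY indep mC iP2 iQ2.
have mC2 : measurable_fun setT (fun x => C x ^+ 2) by exact: measurable_funX.
have Ex i := Rintegral_comp_law (mX i) (lawX i) mC (integrable_of_sqr mC iP2).
have Ey j := Rintegral_comp_law (mY j) (lawY j) mC (integrable_of_sqr mC iQ2).
have Ex2 i := Rintegral_comp_law (mX i) (lawX i) mC2 iP2.
have Ey2 j := Rintegral_comp_law (mY j) (lawY j) mC2 iQ2.
have meanCE (M : probability Xs R) : meanC M C = \int[M]_x C x by [].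
split.
- rewrite (integral_est_Ra hk mxy ixy2 xy_unc Ex Ex2 Ey Ey2).
  rewrite /obj_Ra integral_fLS_subr // integral_fLS_subl // -EFinD.
  by congr EFin; rewrite !meanCE; ring.
- rewrite (integral_est_Ralf hk mxy ixy2 xy_unc Ex Ex2 Ey Ey2).
  by rewrite /obj_Ralf integral_fLS_subr // -EFinM meanCE; congr EFin; ring.
- rewrite (integral_est_Rc hk mxy ixy2 xy_unc Ex Ex2 Ey Ey2).
  rewrite /obj_Rc integral_fLS_subr // integral_fLS_subl // -EFinD.
  by congr EFin; rewrite /meanM !meanCE; field.
Qed.
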